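(* Let $B$ be a minimum-weight basis of the weighted uncertainty matroid $\mathcal{M}=(E,\mathcal{I},A,w)$. A set $Q\subseteq E$ is a certificate of $B$ if and only if $Q$ is a vertex cover of the graph $G^B$ (i.e., every edge of $G^B$, including every loop $\{f,f\}$, has an endpoint in $Q$).
   Context: A weighted uncertainty matroid $\mathcal{M}=(E,\mathcal{I},A,w)$ consists of a matroid $M=(E,\mathcal{I})$ on a finite set $E$, for each $e\in E$ a non-empty finite union $A_e$ of bounded real intervals (each open or closed), and a weight $w_e\in A_e$. $L_e=\inf A_e$, $U_e=\sup A_e$. A minimum-weight basis is a basis minimizing total weight. A weight assignment is $w^*$ with $w^*_e\in A_e$, consistent with $Q$ if $w^*_e=w_e$ on $Q$. $Q$ is a certificate of $B$ if for every weight assignment consistent with $Q$, $B$ is a minimum-weight basis with respect to it. For $e\in E\setminus B$ let $C_e$ be the unique circuit in $B\cup\{e\}$, $F_e=\{f\in C_e\setminus\{e\}: U_f>L_e\}$, $\hat F_e=\{f\in C_e\setminus\{e\}: U_f>w_e\}$. The graph $G^B$ has vertex set $E$ and edge set $\bigcup_{e\in E\setminus B}E^B_e$ (edges may be loops $\{f,f\}$), where: (1) if $w_e\ge U_f$ for all $f\in C_e\setminus\{e\}$ and some $f'\in C_e\setminus\{e\}$ has $w_{f'}>L_e$, then $E^B_e=\{\{e,e\}\}$; (2) if $w_e\ge U_f$ for all $f\in C_e\setminus\{e\}$ and $w_f\le L_e$ for all $f\in C_e\setminus\{e\}$, then $E^B_e=\{\{e,f\}: f\in F_e\}$; (3) if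 some $f\in C_e\setminus\{e\}$ has $w_e<U_f$ and some $f'\in C_e\setminus\{e\}$ has $w_{f'}>L_e$, then $E^B_e=\{\{f,f\}: f\in\hat F_e\cup\{e\}\}$; (4) if some $f\in C_e\setminus\{e\}$ has $w_e<U_f$ and $w_{f'}\le L_e$ for all $f'\in C_e\setminus\{e\}$, then $E^B_e=\{\{e,f\}: f\in F_e\setminus\hat F_e\}\cup\{\{f,f\}: f\in\hat F_e\}$. *)

From HB Require Import structures.
From mathcomp Require Import all_boot all_order all_algebra.
From mathcomp Require Import classical_sets boolp reals.
Set Implicit Arguments. Unset Strict Implicit. Unset Printing Implicit Defensive.
Import Order.TTheory GRing.Theory Num.Theory.
Local Open Scope ring_scope.


Definition matroid_axioms (E : finType) (indep : {set E} -> bool) : Prop :=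
  [/\ indep (finset.set0 : {set E}),
      (forall X Y : {set E}, Y \subset X -> indep X -> indep Y) &
      (forall X Y : {set E}, indep X -> indep Y -> (#|X| < #|Y|)%N ->
         exists2 x, x \in Y :\: X & indep (x |: X))].

Definition is_basis (E : finType) (indep : {set E} -> bool) (B : {set E}) : bool :=
  maxset (fun X => indep X) B.
Definition is_circuit (E : finType) (indep : {set E} -> bool) (C : {set E}) : bool :=
  minset (fun X => ~~ indep X) C.

(** Uncertainty areas: a finite list of bounded intervals, each either closed
    [(true, a, b)] = [a,b] (with a <= b) or open [(false, a, b)] = (a,b)
    (with a < b).  The area is their union. *)
Definition itv_ok (R : realType) (t : bool * R * R) : bool :=
  if t.1.1 then t.1.2 <= t.2 else t.1.2 < t.2.
Definition in_itv_ (R : realType) (t : bool * R * R) (x : R) : bool :=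
  if t.1.1 then (t.1.2 <= x) && (x <= t.2) else (t.1.2 < x) && (x < t.2).
Definition in_area (R : realType) (s : seq (bool * R * R)) (x : R) : bool :=
  has (fun t => in_itv_ t x) s.
Definition area_ok (R : realType) (s : seq (bool * R * R)) : Prop :=
  all (@itv_ok R) s /\ exists x, in_area s x.

Definition Lo (R : realType) (s : seq (bool * R * R)) : R := inf [set x | in_area s x]%classic.
Definition Up (R : realType) (s : seq (bool * R * R)) : R := sup [set x | in_area s x]%classic.

Definition weight (E : finType) (R : realType) (w : E -> R) (X : {set E}) : R :=
  \sum_(e in X) w e.

Definition min_weight_basis (E : finType) (R : realType) (indep : {set E} -> bool)
    (w : E -> R) (B : {set E}) : Prop :=
  is_basis indep B /\
  forall B' : {set E}, is_basis indep B' -> weight w B <= weight w B'.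

Definition certificate (E : finType) (R : realType) (indep : {set E} -> bool)
    (A : E -> seq (bool * R * R)) (w : E -> R) (B Q : {set E}) : Prop :=
  forall w' : E -> R,
    (forall e, in_area (A e) (w' e)) ->
    (forall e, e \in Q -> w' e = w e) ->
    min_weight_basis indep w' B.

(** The edge set E^B_e (given the circuit C = C_e): the unordered pair {x,y}
    belongs to it (edges are represented by ordered pairs; loops as (f,f)). *)
Definition edge_of (E : finType) (R : realType)
    (A : E -> seq (bool * R * R)) (w : E -> R) (e : E) (C : {set E}) (x y : E) : Prop :=
  let D := C :\ e in
  let L := fun f => Lo (A f) in
  let U := fun f => Up (A f) in
  let is_pair := fun a b => (x = a /\ y = b) \/ (x = b /\ y = a) in
  ((forall f, f \in D -> w e >= U f) /\ (exists2 f', f' \in D & w f' > L e) /\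
     is_pair e e)
  \/
  ((forall f, f \in D -> w e >= U f) /\ (forall f, f \in D -> w f <= L e) /\
     exists2 f, f \in D /\ U f > L e & is_pair e f)
  \/
  ((exists2 f, f \in D & w e < U f) /\ (exists2 f', f' \in D & w f' > L e) /\
     ((exists2 f, f \in D /\ U f > w e & is_pair f f) \/ is_pair e e))
  \/
  ((exists2 f, f \in D & w e < U f) /\ (forall f', f' \in D -> w f' <= L e) /\
     ((exists2 f, [/\ f \in D, U f > L e & ~ (U f > w e)] & is_pair e f) \/
      (exists2 f, f \in D /\ U f > w e & is_pair f f))).

Definition GB_edge (E : finType) (R : realType) (indep : {set E} -> bool)
    (A : E -> seq (bool * R * R)) (w : E -> R) (B : {set E}) (x y : E) : Prop :=
  exists e, e \notin B /\
    exists2 C, is_circuit indep C /\ C \subset e |: B & edge_of A w e C x y.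

Definition vertex_cover (E : finType) (R : realType) (indep : {set E} -> bool)
    (A : E -> seq (bool * R * R)) (w : E -> R) (B Q : {set E}) : Prop :=
  forall x y, GB_edge indep A w B x y -> x \in Q \/ y \in Q.

(* By the cycle optimality criterion, a basis B is of minimum weight for w' iff
   w'_f <= w'_e whenever f lies in the fundamental circuit C_e of e.  Among the
   weight assignments consistent with Q, w'_f ranges up to upper_Q f (w_f if
   f \in Q, U_f otherwise) and w'_e down to lower_Q e, independently of each
   other, so Q is a certificate iff upper_Q f <= lower_Q e for all such pairs.
   The edges of G^B are exactly the ways this inequality can fail: a loop at e
   when some w_f > L_e, an edge {e,f} when L_e < U_f <= w_e, a loop at f when
   U_f > w_e.  Hence covering G^B is the same pairwise condition. *)

(* classical_sets comes first so that it does not shadow finset's lemmas. *)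
From mathcomp Require Import classical_sets boolp reals.
From mathcomp Require Import all_boot all_order all_algebra lra.
Set Implicit Arguments. Unset Strict Implicit. Unset Printing Implicit Defensive.
Import Order.TTheory GRing.Theory Num.Theory.
Local Open Scope ring_scope.

Section UncertaintyArea.
Variable R : realType.
Implicit Types (s : seq (bool * R * R)) (x c : R).

Lemma norm_le_area s x : in_area s x -> `|x| <= \sum_(t <- s) (`|t.1.2| + `|t.2|).
Proof.
have sum_ge0 (s' : seq (bool * R * R)) : 0 <= \sum_(t <- s') (`|t.1.2| + `|t.2|).
  by rewrite sumr_ge0 // => t _; rewrite addr_ge0.
elim: s => [|t s IH] //; rewrite /in_area /= big_cons => /orP[xt | /IH xs].
  have [ax xb] : t.1.2 <= x /\ x <= t.2.
    by move: xt; rewrite /in_itv_; case: ifP => _ /andP[] => [|/ltW + /ltW].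
  have := sum_ge0 s; have := ler_norm t.2; have := ler_norm (- t.1.2); rewrite normrN.
  have := normr_ge0 t.1.2; have := normr_ge0 t.2; rewrite ler_norml; lra.
have := normr_ge0 t.1.2; have := normr_ge0 t.2; lra.
Qed.

Lemma area_bounded s :
  has_lbound [set x | in_area s x]%classic /\ has_ubound [set x | in_area s x]%classic.
Proof.
pose b := \sum_(t <- s) (`|t.1.2| + `|t.2|).
by split; [exists (- b) | exists b] => x /norm_le_area; rewrite ler_norml => /andP[].
Qed.

Lemma Lo_le s x : in_area s x -> Lo s <= x.
Proof. by move=> sx; apply: (ge_inf (area_bounded s).1). Qed.

Lemma le_Up s x : in_area s x -> x <= Up s.
Proof. by move=> sx; apply: (ub_le_sup (area_bounded s).2). Qed.

Lemma Lo_lt s c : area_ok s -> Lo s < c -> exists2 x, in_area s x & x < c.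
Proof. by case=> _ s0; apply: inf_lt. Qed.

Lemma lt_Up s c : area_ok s -> c < Up s -> exists2 x, in_area s x & c < x.
Proof. by case=> _ s0; apply: sup_gt. Qed.
End UncertaintyArea.

Section Matroid.
Variables (E : finType) (indep : {set E} -> bool).
Hypothesis indep_matroid : matroid_axioms indep.
Implicit Types (B C M S X Y : {set E}) (e f g x : E).

Let indepS X Y : Y \subset X -> indep X -> indep Y.
Proof. by case: indep_matroid => _ + _; apply. Qed.

Let indep_augment X Y : indep X -> indep Y -> (#|X| < #|Y|)%N ->
  exists2 x, x \in Y :\: X & indep (x |: X).
Proof. by case: indep_matroid => _ _; apply. Qed.

Definition is_basis_of S M : Prop :=
  [/\ M \subset S, indep M & forall x, x \in S -> x \notin M -> ~~ indep (x |: M)].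

Lemma basis_of_card_ge S M Y :
  is_basis_of S M -> indep Y -> Y \subset S -> (#|Y| <= #|M|)%N.
Proof.
case=> _ iM maxM iY sYS; rewrite leqNgt.
apply/negP => /(indep_augment iM iY)[x /setDP[xY xM]].
by move/negP: (maxM x (subsetP sYS x xY) xM).
Qed.

Lemma basis_of_exists S X :
  indep X -> X \subset S -> exists2 M, is_basis_of S M & X \subset M.
Proof.
move=> iX sXS; pose P Z := indep Z && (Z \subset S).
have PX : P X by rewrite /P iX.
have [M /maxsetP[/andP[iM sMS] maxM] sXM] := maxset_exists PX.
exists M => //; split => // x xS xM; apply/negP => ixM.
have := maxM (x |: M); rewrite /P ixM subUset sub1set xS sMS => /(_ isT (subsetUr _ _)) eqM.
by move: xM; rewrite -eqM setU11.
Qed.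

Lemma circuit_dep C : is_circuit indep C -> ~~ indep C.
Proof. by case/minsetP. Qed.

Lemma circuitD1_indep C f : is_circuit indep C -> f \in C -> indep (C :\ f).
Proof.
case/minsetP => _ minC fC; apply: contraT => /minC /(_ (subsetDl _ _)) eqC.
by move: fC; rewrite -eqC setD11.
Qed.

(* Augmenting [M] from [Y] could only add [g], and [g |: M] contains [C]. *)
Lemma circuit_basis_of_card_ge Y S C g M : indep Y -> Y \subset g |: S ->
  is_circuit indep C -> is_basis_of S M -> C :\ g \subset M -> (#|Y| <= #|M|)%N.
Proof.
move=> iY sYS cC [_ iM maxM] sCM; rewrite leqNgt; apply/negP.
move=> /(indep_augment iM iY)[x /setDP[xY xM] ixM].
have [xg | xg] := eqVneq x g.
  move: (circuit_dep cC); rewrite (indepS _ ixM) // xg.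
  apply/subsetP => y yC; rewrite in_setU1; case: eqVneq => //= yg.
  by apply: (subsetP sCM); rewrite !inE yg.
have := subsetP sYS x xY; rewrite in_setU1 (negbTE xg) => /maxM/(_ xM).
by rewrite ixM.
Qed.

(* A basis of [Y :\ g :|: C :\ g] through [C :\ g] has [#|Y|] elements, so
   [Y :\ g] is not one. *)
Lemma circuit_exchange_indep Y C g :
  indep Y -> g \in Y -> is_circuit indep C -> g \in C ->
  exists f, [/\ f \in C :\ g, f \notin Y :\ g & indep (f |: (Y :\ g))].
Proof.
move=> iY gY cC gC; set X := Y :\ g; set S := X :|: C :\ g.
have [M bM sCM] := basis_of_exists (circuitD1_indep cC gC) (subsetUr X _).
have sYS : Y \subset g |: S.
  by apply/subsetP => y yY; rewrite !inE; case: eqVneq => //= _; rewrite yY.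
have cardYM := circuit_basis_of_card_ge iY sYS cC bM sCM.
apply: contrapT => noex.
have bX : is_basis_of S X.
  split; [exact: subsetUl | exact: indepS (subsetDl _ _) iY |].
  move=> x xS xX; apply/negP => ixX; apply: noex; exists x; split => //.
  by move: xS; rewrite in_setU (negbTE xX).
have [sMS iM _] := bM.
have := leq_trans cardYM (basis_of_card_ge bX iM sMS).
by rewrite (cardsD1 g Y) gY ltnn.
Qed.

Lemma basis_indep B : is_basis indep B -> indep B.
Proof. by case/maxsetP. Qed.

Lemma basis_card_ge B Y : is_basis indep B -> indep Y -> (#|Y| <= #|B|)%N.
Proof.
case/maxsetP => iB maxB iY; apply: (basis_of_card_ge _ iY (subsetT Y)).
split => // x _ xB; apply/negP => /maxB /(_ (subsetUr _ _)) eqB.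
by move: xB; rewrite -eqB setU11.
Qed.

Lemma indep_card_basis B X :
  is_basis indep B -> indep X -> (#|B| <= #|X|)%N -> is_basis indep X.
Proof.
move=> bB iX leBX; apply/maxsetP; split => // Y iY sXY; apply/eqP.
by rewrite eq_sym eqEcard sXY (leq_trans (basis_card_ge bB iY)).
Qed.

Lemma bases_card B B' : is_basis indep B -> is_basis indep B' -> #|B| = #|B'|.
Proof.
move=> bB bB'; apply/eqP; rewrite eqn_leq.
by rewrite (basis_card_ge bB' (basis_indep bB)) (basis_card_ge bB (basis_indep bB')).
Qed.

Definition fundamental_circuit B e C : Prop :=
  [/\ e \notin B, is_circuit indep C & C \subset e |: B].

Lemma fundamental_circuit_exists B e : is_basis indep B -> e \notin B ->
  exists C, fundamental_circuit B e C.
Proof.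
case/maxsetP => _ maxB eB; have dep_eB : ~~ indep (e |: B).
  by apply/negP => /maxB /(_ (subsetUr _ _)) eqB; move: eB; rewrite -eqB setU11.
by have [C cC sC] := minset_exists (P := fun X => ~~ indep X) dep_eB; exists C.
Qed.

Lemma fundamental_circuitD1 B e C : indep B -> fundamental_circuit B e C ->
  e \in C /\ C :\ e \subset B.
Proof.
move=> iB [eB cC sC]; split; last first.
  by apply/subsetP => x /setD1P[xe /(subsetP sC)]; rewrite in_setU1 (negbTE xe).
apply: contraT => eC; move: (circuit_dep cC); rewrite (indepS _ iB) //.
apply/subsetP => x xC; move: (subsetP sC x xC); rewrite in_setU1.
by case: eqVneq => [xe|] //=; move: eC; rewrite -xe xC.
Qed.

Lemma basis_exchange B e C f : is_basis indep B -> fundamental_circuit B e C ->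
  f \in C :\ e -> is_basis indep (e |: (B :\ f)).
Proof.
move=> bB fC fCe; have [eC sCeB] := fundamental_circuitD1 (basis_indep bB) fC.
have [eB cC sC] := fC; have fB := subsetP sCeB f fCe.
have [_ fC'] := setD1P fCe; set S := e |: (B :\ f).
have cardS : #|S| = #|B|.
  by rewrite cardsU1 in_setD1 (negbTE eB) andbF (cardsD1 f B) fB.
have sCfS : C :\ f \subset S.
  apply/subsetP => x /setD1P[xf xC]; rewrite /S in_setU1 in_setD1 xf /=.
  by move: (subsetP sC x xC); rewrite in_setU1.
have [M bM sCM] := basis_of_exists (circuitD1_indep cC fC') sCfS.
have sBfS : B \subset f |: S.
  by apply/subsetP => x xB; rewrite /S !inE; case: eqVneq => //= _; rewrite xB orbT.
have cardBM := circuit_basis_of_card_ge (basis_indep bB) sBfS cC bM sCM.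
have [sMS iM _] := bM; have eqMS : M = S by apply/eqP; rewrite eqEcard sMS cardS.
by apply: (indep_card_basis bB); rewrite -eqMS.
Qed.

Lemma basis_exchange_circuit B B' e C : is_basis indep B -> is_basis indep B' ->
  e \in B' -> fundamental_circuit B e C ->
  exists2 f, f \in C :\ e & f \notin B' /\ is_basis indep (f |: (B' :\ e)).
Proof.
move=> bB bB' eB' fC; have [eC sCeB] := fundamental_circuitD1 (basis_indep bB) fC.
have [_ cC _] := fC.
have [f [fCe fB'e ifB']] := circuit_exchange_indep (basis_indep bB') eB' cC eC.
have fB' : f \notin B'.
  by move: fB'e; rewrite in_setD1; have [-> _] := setD1P fCe.
exists f => //; split => //; apply: (indep_card_basis bB ifB').
by rewrite cardsU1 fB'e (bases_card bB bB') (cardsD1 e B') eB'.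
Qed.

Variable R : realType.
Implicit Types w : E -> R.

Lemma weight_exchange w B e f : e \notin B -> f \in B ->
  weight w (e |: (B :\ f)) = w e + weight w B - w f.
Proof.
move=> eB fB; rewrite /weight big_setU1 /=; last by rewrite in_setD1 (negbTE eB) andbF.
by rewrite (big_setD1 f fB) /= [w f + _]addrC addrA addrK.
Qed.

Lemma min_weight_basis_circuits w B : is_basis indep B ->
  min_weight_basis indep w B <->
  (forall e C, fundamental_circuit B e C -> forall f, f \in C :\ e -> w f <= w e).
Proof.
move=> bB; split.
  move=> [_ minB] e C fC f fCe; have [eB _ _] := fC.
  have fB := subsetP (fundamental_circuitD1 (basis_indep bB) fC).2 f fCe.
  by have := minB _ (basis_exchange bB fC fCe); rewrite weight_exchange //; lra.
move=> circuit_opt; split => // B' bB'.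
have [n] := ubnP #|B' :\: B|; elim: n => // n IH in B' bB' *; rewrite ltnS => leB'n.
have [B'B0 | [e /setDP[eB' eB]]] := set_0Vmem (B' :\: B).
  have [_ maxB'] := maxsetP bB'; rewrite (maxB' B) ?basis_indep //.
  by rewrite -setD_eq0 B'B0.
have [C fC] := fundamental_circuit_exists bB eB.
have [f fCe [fB' bB'']] := basis_exchange_circuit bB bB' eB' fC.
have fB := subsetP (fundamental_circuitD1 (basis_indep bB) fC).2 f fCe.
apply: le_trans (IH _ bB'' _) _.
  have sB''B' : (f |: (B' :\ e)) :\: B \subset (B' :\: B) :\ e.
    apply/subsetP => x; rewrite !inE; case: eqVneq => [-> | _]; first by rewrite fB.
    by case: (x == e); case: (x \in B).
  apply: leq_ltn_trans (subset_leq_card sB''B') _; apply: leq_trans leB'n.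
  by rewrite [in X in (_ < X)%N](cardsD1 e (B' :\: B)) inE eB eB'.
by rewrite weight_exchange //; have := circuit_opt e C fC f fCe; lra.
Qed.

End Matroid.

Definition upair (T : Type) (x y a b : T) : Prop := (x = a /\ y = b) \/ (x = b /\ y = a).

Lemma upair_cover (T : eqType) (Q : pred T) x y a b :
  upair x y a b -> Q a \/ Q b -> Q x \/ Q y.
Proof. by case=> [[-> ->] | [-> ->]] []; auto. Qed.

Lemma all_leVexists_gt (T : finType) (R : realDomainType) (D : {set T}) (a : T -> R) b :
  (forall f, f \in D -> a f <= b) \/ exists2 f, f \in D & b < a f.
Proof.
have [/forall_inP | /forall_inPn[f fD]] := boolP [forall f in D, a f <= b]; first by left.
by right; exists f; rewrite // ltNge.
Qed.

Section CircuitEdges.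
Variables (E : finType) (R : realDomainType) (L U w : E -> R).

(* The edge set E^B_e of the paper (with D = C_e \ e), its four cases regrouped
   by the kind of edge; see edge_ofE. *)
Definition circuit_edge (e : E) (D : {set E}) (x y : E) : Prop :=
  [\/ (exists2 f, f \in D & L e < w f) /\ upair x y e e,
      (forall f, f \in D -> w f <= L e) /\
        (exists2 f, f \in D /\ L e < U f <= w e & upair x y e f)
    | exists2 f, f \in D /\ w e < U f & upair x y f f].

Variable Q : {set E}.
Hypotheses (w_le_U : forall f, w f <= U f) (L_le_w : forall e, L e <= w e).

Definition upper_Q f := if f \in Q then w f else U f.
Definition lower_Q e := if e \in Q then w e else L e.

Lemma le_upper_Q f : w f <= upper_Q f.
Proof. by rewrite /upper_Q; case: ifP. Qed.

Lemma lower_Q_le e : lower_Q e <= w e.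
Proof. by rewrite /lower_Q; case: ifP. Qed.

Lemma circuit_cover_iff e (D : {set E}) : (forall f, f \in D -> w f <= w e) ->
  (forall x y, circuit_edge e D x y -> x \in Q \/ y \in Q) <->
  (forall f, f \in D -> upper_Q f <= lower_Q e).
Proof.
move=> le_we; split => [cover f fD | pairs x y].
  have uncovered (x y : E) : circuit_edge e D x y -> x \notin Q -> y \notin Q -> False.
    by move=> /cover + /negP xQ /negP yQ; case.
  rewrite /upper_Q /lower_Q; case: ifPn => fQ; case: ifPn => eQ; rewrite ?le_we //.
  - rewrite leNgt; apply/negP => lt.
    by apply: (uncovered e e) => //; apply: Or31; split; [exists f | left].
  - rewrite leNgt; apply/negP => lt.
    by apply: (uncovered f f) => //; apply: Or33; exists f => //; left.
  rewrite leNgt; apply/negP => lt.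
  have [le_wL | [f' f'D lt']] := all_leVexists_gt D w (L e); last first.
    by apply: (uncovered e e) => //; apply: Or31; split; [exists f' | left].
  have [le_Uw | lt_wU] := leP (U f) (w e).
    apply: (uncovered e f) => //; apply: Or32.
    by split => //; exists f; [rewrite lt le_Uw | left].
  by apply: (uncovered f f) => //; apply: Or33; exists f => //; left.
case=> [[[f fD lt] p] | [_ [f [fD /andP[lt _]] p]] | [f [fD lt] p]]; apply: (upair_cover p).
- have := le_trans (le_upper_Q f) (pairs f fD).
  by rewrite /lower_Q; case: ifP => eQ; [left | rewrite leNgt lt].
- have := pairs f fD; rewrite /upper_Q /lower_Q.
  by case: ifP => fQ; [right | case: ifP => eQ; [left | rewrite leNgt lt]].
- have := le_trans (pairs f fD) (lower_Q_le e).
  by rewrite /upper_Q; case: ifP => fQ; [left | rewrite leNgt lt].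
Qed.

End CircuitEdges.

Lemma edge_ofE (R : realType) (E : finType) (A : E -> seq (bool * R * R)) (w : E -> R)
    e C x y :
  edge_of A w e C x y <->
  circuit_edge (fun f => Lo (A f)) (fun f => Up (A f)) w e (C :\ e) x y.
Proof.
rewrite /circuit_edge; split.
  case=> [[_ [ex p]] | [[leU [lew [f [fD lt] p]]] | [[_ [ex [[f [fD lt] p] | p]]] |
    [_ [lew [[f [fD lt nlt] p] | [f [fD lt] p]]]]]]].
  - exact: Or31.
  - by apply: Or32; split => //; exists f; rewrite ?lt ?leU.
  - by apply: Or33; exists f.
  - exact: Or31.
  - by apply: Or32; split => //; exists f => //; split => //; rewrite lt leNgt; apply/negP.
  - by apply: Or33; exists f.
have [leU | exU] := all_leVexists_gt (C :\ e) (fun f => Up (A f)) (w e).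
  case=> [[ex p] | [lew [f [fD /andP[lt _]] p]] | [f [fD lt] p]].
  - by left; split => //; split => //; right.
  - by right; left; split => //; split => //; exists f.
  - by move: (leU f fD); rewrite leNgt lt.
have [lew | exw] := all_leVexists_gt (C :\ e) w (Lo (A e)).
  case=> [[[f fD lt] p] | [_ [f [fD /andP[lt le]] p]] | [f fDlt p]].
  - by move: (lew f fD); rewrite leNgt lt.
  - do 3 right; split => //; split => //; left; exists f => //.
    by split => //; apply/negP; rewrite -leNgt.
  - by do 3 right; split => //; split => //; right; exists f.
case=> [[_ p] | [lew _] | [f fDlt p]].
- by do 2 right; left; split => //; split => //; right.
- by have [f fD lt] := exw; move: (lew f fD); rewrite leNgt lt.
- by do 2 right; left; split => //; split => //; left; exists f.
Qed.

Section Certificate.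
Variables (R : realType) (E : finType) (indep : {set E} -> bool)
  (A : E -> seq (bool * R * R)) (w : E -> R) (B Q : {set E}).
Hypotheses (indep_matroid : matroid_axioms indep) (A_ok : forall e, area_ok (A e))
  (w_in_A : forall e, in_area (A e) (w e)) (B_min : min_weight_basis indep w B).

Let L f := Lo (A f).
Let U f := Up (A f).
Let upper := upper_Q U w Q.
Let lower := lower_Q L w Q.

Let w_le_U f : w f <= U f. Proof. exact: le_Up. Qed.
Let L_le_w e : L e <= w e. Proof. exact: Lo_le. Qed.

Let B_basis : is_basis indep B. Proof. by case: B_min. Qed.

Let B_circuits :
  forall e C, fundamental_circuit indep B e C -> forall f, f \in C :\ e -> w f <= w e.
Proof. exact: (min_weight_basis_circuits indep_matroid w B_basis).1 B_min. Qed.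

Definition fundamental_order_forced : Prop :=
  forall e C, fundamental_circuit indep B e C -> forall f, f \in C :\ e -> upper f <= lower e.

Definition consistent (w' : E -> R) : Prop :=
  (forall e, in_area (A e) (w' e)) /\ (forall e, e \in Q -> w' e = w e).

Lemma consistent_le_upper w' f : consistent w' -> w' f <= upper f.
Proof.
by case=> Aw' w'Q; rewrite /upper /upper_Q; case: ifP => [/w'Q -> | _]; last exact: le_Up.
Qed.

Lemma lower_le_consistent w' e : consistent w' -> lower e <= w' e.
Proof.
by case=> Aw' w'Q; rewrite /lower /lower_Q; case: ifP => [/w'Q -> | _]; last exact: Lo_le.
Qed.

Lemma lower_lt e c : lower e < c ->
  exists2 y, in_area (A e) y & (e \in Q -> y = w e) /\ y < c.
Proof.
rewrite /lower /lower_Q; case: ifP => eQ lt; first by exists (w e).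
by have [y Ay lty] := Lo_lt (A_ok e) lt; exists y; rewrite ?eQ.
Qed.

Lemma gt_upper f c : c < upper f ->
  exists2 x, in_area (A f) x & (f \in Q -> x = w f) /\ c < x.
Proof.
rewrite /upper /upper_Q; case: ifP => fQ lt; first by exists (w f).
by have [x Ax ltx] := lt_Up (A_ok f) lt; exists x; rewrite ?fQ.
Qed.

Lemma certificateE : certificate indep A w B Q <-> fundamental_order_forced.
Proof.
split => [cert e C fC f fCe | pairs w' Aw' w'Q].
  rewrite leNgt; apply/negP => lt_lu.
  have [y Ay [yQ lty]] := lower_lt lt_lu.
  have [x Ax [xQ ltyx]] := gt_upper lty.
  have fe : f != e by have [] := setD1P fCe.
  pose w' g := if g == e then y else if g == f then x else w g.
  have w'_min : min_weight_basis indep w' B.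
    apply: cert => [g | g gQ]; rewrite /w'.
      by case: eqP => [-> // | _]; case: eqP => [-> // | _].
    case: eqP => [ge | _]; first by rewrite yQ // -ge.
    by case: eqP => [gf | //]; rewrite xQ // -gf.
  have := (min_weight_basis_circuits indep_matroid _ B_basis).1 w'_min e C fC f fCe.
  by rewrite /w' eqxx (negbTE fe) eqxx leNgt ltyx.
apply/(min_weight_basis_circuits indep_matroid _ B_basis) => e C fC f fCe.
have w'_cons : consistent w' by [].
apply: le_trans (consistent_le_upper f w'_cons) _.
exact: le_trans (pairs e C fC f fCe) (lower_le_consistent e w'_cons).
Qed.

Lemma vertex_coverE : vertex_cover indep A w B Q <-> fundamental_order_forced.
Proof.
have cover_iff e C (fC : fundamental_circuit indep B e C) :=
  circuit_cover_iff Q w_le_U L_le_w (B_circuits fC).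
split => [cover e C fC | pairs x y [e [eB [C [cC sC] exy]]]].
  apply: (cover_iff e C fC).1 => x y /edge_ofE exy.
  by apply: cover; exists e; have [eB cC sC] := fC; split => //; exists C.
have fC : fundamental_circuit indep B e C by [].
by apply: ((cover_iff e C fC).2 (pairs e C fC) x y); apply/edge_ofE.
Qed.
End Certificate.

Theorem corollary27 (R : realType) (E : finType) (indep : {set E} -> bool)
    (A : E -> seq (bool * R * R)) (w : E -> R) (B Q : {set E}) :
  matroid_axioms indep ->
  (forall e, area_ok (A e)) ->
  (forall e, in_area (A e) (w e)) ->
  min_weight_basis indep w B ->
  certificate indep A w B Q <-> vertex_cover indep A w B Q.
Proof.
move=> indep_matroid A_ok w_in_A B_min.
have certE := certificateE Q indep_matroid A_ok w_in_A B_min.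
have coverE := vertex_coverE Q indep_matroid w_in_A B_min.
by split => [/certE/coverE | /coverE/certE].
Qed.
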